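(* Let $\Lambda$ be an artin algebra and $C,Y$ $\Lambda$-modules. The map $\eta_{CY}: {}^C[\to Y\rangle\to \mathcal S\operatorname{Hom}(C,Y)$, $[f\rangle\mapsto f\cdot\operatorname{Hom}(C,X)$ for $f: X\to Y$, is injective and preserves meets (i.e. it sends the meet of two elements of ${}^C[\to Y\rangle$ to the intersection of their images). Consequently it preserves and reflects the ordering.
   Context: All modules are finite length left $\Lambda$-modules. For maps $f: X\to Y$, $f': X'\to Y$, write $f\preceq f'$ if $f=f'h$ for some $h$; right equivalence is $f\preceq f'\preceq f$, $[f\rangle$ is the class, ordered by $[f\rangle\le[f'\rangle$ iff $f\preceq f'$; the meet of $[f_1\rangle,[f_2\rangle$ is $[f_1g_1\rangle$ for a pullback $g_1,g_2$ of $f_1,f_2$. A map $f: X\to Y$ is right $C$-determined if every $f': X'\to Y$ such that $f'\phi$ factors through $f$ for all $\phi: C\to X'$ itself factors through $f$. ${}^C[\to Y\rangle$ is the set of classes of right $C$-determined maps ending in $Y$ (closed under meets). $\Gamma(C)=\operatorname{End}(C)^{\mathrm{op}}$, $\operatorname{Hom}(C,Y)$ is a $\Gamma(C)$-module, and $\mathcal S\operatorname{Hom}(C,Y)$ is its lattice of $\Gamma(C)$-submodules; $f\cdot \operatorname{Hom}(C,X)=\operatorname{Im}\operatorname{Hom}(C,f)$ is a submodule and depends only on $[f\rangle$. *)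

From HB Require Import structures.
From mathcomp Require Import all_boot all_order all_algebra.
Set Implicit Arguments. Unset Strict Implicit. Unset Printing Implicit Defensive.
Import GRing.Theory.
Local Open Scope ring_scope.

Definition is_submod (K : pzRingType) (V : lmodType K) (S : V -> Prop) : Prop :=
  S 0 /\ (forall x y, S x -> S y -> S (x + y)) /\
  (forall (a : K) x, S x -> S (a *: x)).

(** A commutative artinian ring: DCC on ideals (= submodules of the regular module). *)
Definition artinian_comring (R : comNzRingType) : Prop :=
  forall I : nat -> R^o -> Prop,
    (forall n, is_submod (I n)) ->
    (forall n x, I n.+1 x -> I n x) ->
    exists N, forall n, (N <= n)%N -> forall x, I n x <-> I N x.

Definition fin_gen (K : pzRingType) (V : lmodType K) : Prop :=
  exists (n : nat) (v : 'I_n -> V),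
    forall x, exists r : 'I_n -> K, x = \sum_(i < n) r i *: v i.

Definition artin_algebra (R : comNzRingType) (L : algType R) : Prop :=
  artinian_comring R /\ fin_gen L.

Definition finite_length (L : pzRingType) (M : lmodType L) : Prop :=
  exists n : nat, forall (k : nat) (S : nat -> M -> Prop),
    (forall i, is_submod (S i)) ->
    (forall i, (i < k)%N ->
       (forall x, S i x -> S i.+1 x) /\ (exists x, S i.+1 x /\ ~ S i x)) ->
    (k <= n)%N.

Definition rprec (L : pzRingType) (A B Y : lmodType L) (f : A -> Y) (f' : B -> Y) : Prop :=
  exists h : {linear A -> B}, forall a, f a = f' (h a).

Definition right_det (L : pzRingType) (C X Y : lmodType L) (f : {linear X -> Y}) : Prop :=
  forall (X' : lmodType L) (f' : {linear X' -> Y}),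
    finite_length X' ->
    (forall phi : {linear C -> X'}, rprec (f' \o phi) f) ->
    rprec f' f.

(** f · Hom(C,X) = Im Hom(C,f), as a subset of Hom(C,Y). *)
Definition hom_image (L : pzRingType) (C X Y : lmodType L) (f : X -> Y)
  : {linear C -> Y} -> Prop :=
  fun psi => exists phi : {linear C -> X}, forall c, psi c = f (phi c).

(** Γ(C)-submodules of Hom(C,Y), Γ(C) = End(C)^op acting by precomposition. *)
Definition is_Gamma_submod (L : pzRingType) (C Y : lmodType L)
  (S : {linear C -> Y} -> Prop) : Prop :=
  (forall psi : {linear C -> Y}, (forall c, psi c = 0) -> S psi) /\
  (forall psi1 psi2 psi : {linear C -> Y}, S psi1 -> S psi2 ->
     (forall c, psi c = psi1 c + psi2 c) -> S psi) /\
  (forall (psi psi' : {linear C -> Y}) (e : {linear C -> C}), S psi ->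
     (forall c, psi' c = psi (e c)) -> S psi').

Definition is_pullback (L : pzRingType) (X1 X2 Y P : lmodType L)
  (f1 : X1 -> Y) (f2 : X2 -> Y) (g1 : {linear P -> X1}) (g2 : {linear P -> X2}) : Prop :=
  (forall p, f1 (g1 p) = f2 (g2 p)) /\
  forall (Q : lmodType L) (u1 : {linear Q -> X1}) (u2 : {linear Q -> X2}),
    finite_length Q ->
    (forall q, f1 (u1 q) = f2 (u2 q)) ->
    exists u : {linear Q -> P},
      (forall q, g1 (u q) = u1 q /\ g2 (u q) = u2 q) /\
      (forall u' : {linear Q -> P},
         (forall q, g1 (u' q) = u1 q /\ g2 (u' q) = u2 q) -> forall q, u' q = u q).

From HB Require Import structures.
From mathcomp Require Import all_boot all_order all_algebra.

(** Every [f \o phi] with [phi : C -> X] lies in [f . Hom(C, X)], so inclusion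
    [f . Hom(C, X) <= f' . Hom(C, X')] says exactly that every [f \o phi]
    factors through [f']; for right [C]-determined [f'] this forces [f] itself
    to factor through [f'].  Hence [eta] reflects the order, and being
    obviously monotone it is injective on right equivalence classes.  Meets go
    to intersections because a pair of maps [C -> X1], [C -> X2] agreeing over
    [Y] factors through the pullback. *)

Set Implicit Arguments.
Unset Strict Implicit.
Unset Printing Implicit Defensive.

Section HomImage.

Variables (L : pzRingType) (C Y : lmodType L).

Lemma hom_image_comp (X : lmodType L) (f : {linear X -> Y}) (phi : {linear C -> X}) :
  hom_image (C := C) f (f \o phi).
Proof. by exists phi. Qed.

Lemma hom_image_Gamma_submod (X : lmodType L) (f : {linear X -> Y}) :
  is_Gamma_submod (hom_image (C := C) f).
Proof.
split; last split.
- by move=> psi psi0; exists \0%R => c /=; rewrite psi0 GRing.linear0.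
- move=> psi1 psi2 psi [phi1 def1] [phi2 def2] defD.
  by exists (phi1 \+ phi2)%R => c /=; rewrite defD def1 def2 GRing.linearD.
- by move=> psi psi' e [phi defpsi] defpsi'; exists (phi \o e) => c /=; rewrite defpsi' defpsi.
Qed.

Lemma hom_image_rprec (X X' : lmodType L) (f : X -> Y) (f' : X' -> Y) :
  rprec f f' -> forall psi, hom_image (C := C) f psi -> hom_image (C := C) f' psi.
Proof.
by move=> [h defh] psi [phi defpsi]; exists (h \o phi) => c /=; rewrite defpsi defh.
Qed.

Lemma right_det_rprec (X X' : lmodType L) (f : {linear X -> Y}) (f' : {linear X' -> Y}) :
  finite_length X -> right_det C f' ->
  (forall psi, hom_image (C := C) f psi -> hom_image (C := C) f' psi) ->
  rprec f f'.
Proof.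
move=> fl_X detf' sub_ff'; apply: detf' => // phi.
have [phi' defphi'] := sub_ff' _ (hom_image_comp f phi).
by exists phi' => c; rewrite -defphi'.
Qed.

Lemma hom_image_pullback (X1 X2 P : lmodType L) (f1 : X1 -> Y) (f2 : X2 -> Y)
    (g1 : {linear P -> X1}) (g2 : {linear P -> X2}) :
  finite_length C -> is_pullback f1 f2 g1 g2 ->
  forall psi, hom_image (C := C) (f1 \o g1) psi <->
              hom_image (C := C) f1 psi /\ hom_image (C := C) f2 psi.
Proof.
move=> fl_C [square univ] psi; split.
- move=> [phi defpsi]; split.
    by exists (g1 \o phi) => c /=; rewrite defpsi.
  by exists (g2 \o phi) => c /=; rewrite defpsi /= square.
- move=> [[phi1 def1] [phi2 def2]].
  have [|u [factor_u _]] := univ C phi1 phi2 fl_C.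
    by move=> c; rewrite -def1 -def2.
  by exists u => c /=; rewrite def1 (factor_u c).1.
Qed.

End HomImage.

Theorem proposition4p3 (R : comNzRingType) (L : algType R) (C Y : lmodType L) :
  artin_algebra L -> finite_length C -> finite_length Y ->
  (forall (X : lmodType L) (f : {linear X -> Y}),
     finite_length X -> is_Gamma_submod (hom_image (C := C) f)) /\
  (forall (X X' : lmodType L) (f : {linear X -> Y}) (f' : {linear X' -> Y}),
     finite_length X -> finite_length X' ->
     right_det C f -> right_det C f' ->
     (forall psi, hom_image (C := C) f psi <-> hom_image (C := C) f' psi) ->
     rprec f f' /\ rprec f' f) /\
  (forall (X1 X2 P : lmodType L) (f1 : {linear X1 -> Y}) (f2 : {linear X2 -> Y})
          (g1 : {linear P -> X1}) (g2 : {linear P -> X2}),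
     finite_length X1 -> finite_length X2 -> finite_length P ->
     right_det C f1 -> right_det C f2 ->
     is_pullback f1 f2 g1 g2 ->
     forall psi, hom_image (C := C) (f1 \o g1) psi <->
                 hom_image (C := C) f1 psi /\ hom_image (C := C) f2 psi) /\
  (forall (X X' : lmodType L) (f : {linear X -> Y}) (f' : {linear X' -> Y}),
     finite_length X -> finite_length X' ->
     right_det C f -> right_det C f' ->
     (rprec f f' <->
      forall psi, hom_image (C := C) f psi -> hom_image (C := C) f' psi)).
Proof.
move=> _ fl_C _; split; last split; last split.
- by move=> X f _; apply: hom_image_Gamma_submod.
- move=> X X' f f' fl_X fl_X' detf detf' same_image.
  split; [apply: (right_det_rprec fl_X detf') | apply: (right_det_rprec fl_X' detf)];
    by move=> psi /same_image.
- by move=> X1 X2 P f1 f2 g1 g2 _ _ _ _ _; apply: hom_image_pullback.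
- move=> X X' f f' fl_X _ _ detf'; split; first exact: hom_image_rprec.
  exact: right_det_rprec.
Qed.
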